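(* Let $\mathcal H_+=\mathcal H_-=\mathbb C^2$, $\mathcal H=\mathcal H_+\oplus\mathcal H_-$. Fix $b>0$ and $d_1,d_2\in i\mathbb R$, and put $B=\begin{pmatrix}b&0\\0&0\end{pmatrix}$, $D=\begin{pmatrix}d_1&0\\0&d_2\end{pmatrix}$. For $\alpha,\beta\in\mathbb C$ with $|\alpha|^2+|\beta|^2=1$ let $u=\begin{pmatrix}\alpha&0\\ \beta&0\end{pmatrix}$ and $$\mu=\begin{pmatrix}0&-Bu^*\\ uB&D\end{pmatrix}.$$ Then for all integers $n\ge1$ and $1\le k\le n+1$ there exist polynomials $p_1,p_2$ in two variables with real coefficients (depending only on $n,k,b,d_1,d_2$) such that for all such $\alpha,\beta$, $$i^{n+1}\big(\mu H^{n-1}_{k-1}(\mu)\big)_{--}\,u=\begin{pmatrix} i\,p_1(|\alpha|^2,|\beta|^2)\,\alpha & 0\\ i\,p_2(|\alpha|^2,|\beta|^2)\,\beta & 0\end{pmatrix}.$$ Equivalently, the equation $\frac{\partial}{\partial t^n_k}u=i^{n+1}(\mu H^{n-1}_{k-1}(\mu))_{--}u$ becomes $\frac{\partial}{\partial t^n_k}\alpha=i p_1(|\alpha|^2,|\beta|^2)\alpha$, $\frac{\partial}{\partial t^n_k}\beta=i p_2(|\alpha|^2,|\beta|^2)\beta$.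
   Context: $P_+$ and $P_-$ denote the orthogonal projectors of $\mathcal H$ onto $\mathcal H_+$ and $\mathcal H_-$; for an operator $X$ on $\mathcal H$, $X_{--}$ denotes the block $P_-XP_-$ regarded as an operator on $\mathcal H_-$. For integers $m\ge 0$ and $0\le l\le m+1$ and a matrix $\mu$ on $\mathcal H$, define $$H^m_l(\mu)=\sum_{\substack{i_0,\dots,i_m\in\{0,1\}\\ i_0+\dots+i_m=l}} P_+^{i_0}\mu P_+^{i_1}\mu\cdots\mu P_+^{i_m},$$ with $P_+^0=I$ the identity and $P_+^1=P_+$. *)

From HB Require Import structures.
From mathcomp Require Import all_boot all_order all_algebra.
From mathcomp Require Import complex.
From mathcomp Require Import reals.
From mathcomp Require Import mpoly.
Set Implicit Arguments. Unset Strict Implicit. Unset Printing Implicit Defensive.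
Import Order.TTheory GRing.Theory Num.Theory.
Local Open Scope ring_scope.

(* H = H_+ (+) H_- = C^2 (+) C^2, realised as 'M_(2+2) block matrices;
   H_+ corresponds to the first block. *)
Section Defs.
Variable C : nzRingType.

Definition mx2 (a b c d : C) : 'M[C]_2 :=
  \matrix_(i < 2, j < 2)
    if i == ord0 then (if j == ord0 then a else b) else (if j == ord0 then c else d).

Definition Pplus : 'M[C]_(2 + 2) := block_mx 1%:M 0 0 0.

Definition Ppow (i : bool) : 'M[C]_(2 + 2) := if i then Pplus else 1%:M.

Fixpoint Hword (mu : 'M[C]_(2 + 2)) (r : seq bool) : 'M[C]_(2 + 2) :=
  match r with
  | [::] => 1%:M
  | i :: r' => mu *m Ppow i *m Hword mu r'
  end.

Definition Hterm (mu : 'M[C]_(2 + 2)) (r : seq bool) : 'M[C]_(2 + 2) :=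
  match r with
  | [::] => 1%:M
  | i0 :: r' => Ppow i0 *m Hword mu r'
  end.

Definition Hml (m l : nat) (mu : 'M[C]_(2 + 2)) : 'M[C]_(2 + 2) :=
  \sum_(t : (m.+1).-tuple bool | count id t == l) Hterm mu t.

(* X_{--} = P_- X P_- regarded as an operator on H_- *)
Definition blockmm (X : 'M[C]_(2 + 2)) : 'M[C]_2 := drsubmx X.
End Defs.

Local Open Scope complex_scope.

Definition conj_tr (R : rcfType) (A : 'M[R[i]]_2) : 'M[R[i]]_2 :=
  map_mx (@conjc R) A^T.

Definition mu_of (R : rcfType) (b : R) (d1 d2 alpha beta : R[i]) : 'M[R[i]]_(2 + 2) :=
  let B := mx2 (b%:C) 0 0 0 in
  let D := mx2 d1 0 0 d2 in
  let u := mx2 alpha 0 beta 0 in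
  block_mx 0 (- (B *m conj_tr u)) (u *m B) D.

From HB Require Import structures.
From mathcomp Require Import all_boot all_order all_algebra.
From mathcomp Require Import complex.
From mathcomp Require Import reals.
From mathcomp Require Import mpoly.
From mathcomp Require Import ring.
Import Order.TTheory GRing.Theory Num.Theory.
Set Implicit Arguments. Unset Strict Implicit. Unset Printing Implicit Defensive.
Local Open Scope ring_scope.
Local Open Scope complex_scope.

(* Every vector obtained from (0, (alpha, beta)) in H_+ (+) H_- by applying P_+ and mu
   has the shape (i^(m+1) f0, 0 ; i^m f1 alpha, i^m f2 beta), where m counts the factors
   mu and f0, f1, f2 are real polynomials in |alpha|^2, |beta|^2: P_+ kills the lower
   block, and mu raises m by one since B u^* pairs alpha with its conjugate and
   D = i diag(Im d1, Im d2).  As u has zero second column, the left-hand side only sees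
   mu H^(n-1)_(k-1)(mu) applied to (0, (alpha, beta)), a sum of such vectors with m = n,
   and the prefactor i^(n+1) turns i^n into i (-1)^n. *)

Section Mx2.
Variable K : nzRingType.

Definition col2 (x y : K) : 'cV[K]_2 := \col_(i < 2) if i == ord0 then x else y.

Lemma col2D (x y z w : K) : col2 x y + col2 z w = col2 (x + z) (y + w).
Proof. by apply/matrixP => i j; rewrite !mxE; case: ifP. Qed.

Lemma col2N (x y : K) : - col2 x y = col2 (- x) (- y).
Proof. by apply/matrixP => i j; rewrite !mxE; case: ifP. Qed.

Lemma col200 : col2 0 0 = 0 :> 'cV[K]_2.
Proof. by apply/matrixP => i j; rewrite !mxE; case: ifP. Qed.

Lemma mx2_mul_col2 (a b c d x y : K) :
  mx2 a b c d *m col2 x y = col2 (a * x + b * y) (c * x + d * y).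
Proof.
by apply/matrixP => i j; rewrite !mxE big_ord_recl big_ord1 !mxE; case: i => [[|[|?]] ?].
Qed.

Lemma mulmx_mx2_col (M : 'M[K]_2) (a c : K) :
  M *m mx2 a 0 c 0 = mx2 ((M *m col2 a c) 0 0) 0 ((M *m col2 a c) 1 0) 0.
Proof.
apply/matrixP => i j; rewrite !mxE !big_ord_recl !big_ord0 !mxE /=.
case: eqP => _; last by rewrite !mulr0 !addr0; case: ifP.
by case: i => [[|[|?]] ?] //=; congr (M _ _ * _ + (M _ _ * _ + _)); apply: val_inj.
Qed.

Lemma blockmm_mul_col (X : 'M[K]_(2 + 2)) (a c : K) :
  blockmm X *m mx2 a 0 c 0 =
  mx2 (dsubmx (X *m col_mx 0 (col2 a c)) 0 0) 0 (dsubmx (X *m col_mx 0 (col2 a c)) 1 0) 0.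
Proof.
by rewrite mulmx_mx2_col -[X in X *m col_mx _ _]submxK mul_block_col col_mxKd mulmx0 add0r.
Qed.

End Mx2.

Section SquaredModuli.
Variable R : rcfType.
Notation C := R[i].

Definition sqnorm_vec (a c : C) (j : 'I_2) : C :=
  if j == ord0 then `|a| ^+ 2 else `|c| ^+ 2.

Definition eval_sqnorm (p : {mpoly R[2]}) (a c : C) : C :=
  (map_mpoly (real_complex R) p).@[sqnorm_vec a c].

Lemma eval_sqnorm0 a c : eval_sqnorm 0 a c = 0.
Proof. by rewrite /eval_sqnorm raddf0 meval0. Qed.

Lemma eval_sqnorm1 a c : eval_sqnorm 1 a c = 1.
Proof. by rewrite /eval_sqnorm rmorph1 meval1. Qed.

Lemma eval_sqnormC (r : R) a c : eval_sqnorm r%:MP a c = r%:C.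
Proof. by rewrite /eval_sqnorm map_mpolyC mevalC /=. Qed.

Lemma eval_sqnormD p q a c :
  eval_sqnorm (p + q) a c = eval_sqnorm p a c + eval_sqnorm q a c.
Proof. by rewrite /eval_sqnorm rmorphD mevalD. Qed.

Lemma eval_sqnormM p q a c :
  eval_sqnorm (p * q) a c = eval_sqnorm p a c * eval_sqnorm q a c.
Proof. by rewrite /eval_sqnorm rmorphM mevalM. Qed.

Lemma eval_sqnormX0 a c : eval_sqnorm 'X_ord0 a c = a * a^*%C.
Proof. by rewrite /eval_sqnorm map_mpolyX mevalXU /sqnorm_vec eqxx normCK. Qed.

Lemma eval_sqnormX1 a c : eval_sqnorm 'X_ord_max a c = c * c^*%C.
Proof. by rewrite /eval_sqnorm map_mpolyX mevalXU /sqnorm_vec /= normCK. Qed.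

End SquaredModuli.

Section PhaseColumns.
Variable R : rcfType.
Notation C := R[i].

Lemma expr_i_addn2 m : 'i ^+ m.+2 = - 'i ^+ m :> C.
Proof. by rewrite !exprS mulrA -expr2 sqr_i mulN1r. Qed.

Lemma expr_i_odd m : 'i ^+ m.+1 * 'i ^+ m = 'i * (-1) ^+ m :> C.
Proof. by rewrite exprS -mulrA -exprMn -expr2 sqr_i. Qed.

Lemma Re0_imaginary (d : C) : Re d = 0 -> d = 'i * (complex.Im d)%:C.
Proof. by move=> Red0; rewrite {1}(complexE d) complexRe Red0 add0r. Qed.

Lemma conj_tr_mx2 (a b c d : C) : conj_tr (mx2 a b c d) = mx2 a^*%C c^*%C b^*%C d^*%C.
Proof.
by apply/matrixP => i j; rewrite !mxE; case: i => [[|[|?]] ?]; case: j => [[|[|?]] ?].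
Qed.

Definition phase_col (m : nat) (x0 x1 x2 a c : C) : 'cV[C]_(2 + 2) :=
  col_mx (col2 ('i ^+ m.+1 * x0) 0) (col2 ('i ^+ m * x1 * a) ('i ^+ m * x2 * c)).

Lemma phase_colD m x0 x1 x2 y0 y1 y2 a c :
  phase_col m x0 x1 x2 a c + phase_col m y0 y1 y2 a c =
  phase_col m (x0 + y0) (x1 + y1) (x2 + y2) a c.
Proof.
rewrite /phase_col add_col_mx !col2D addr0.
by congr (col_mx (col2 _ _) (col2 _ _)); ring.
Qed.

Lemma phase_col0 m a c : phase_col m 0 0 0 a c = 0.
Proof. by rewrite /phase_col !mulr0 !mul0r col200 col_mx0. Qed.

Lemma Pplus_phase_col m x0 x1 x2 a c :
  Pplus C *m phase_col m x0 x1 x2 a c = phase_col m x0 0 0 a c.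
Proof.
by rewrite /Pplus /phase_col mul_block_col !mul1mx !mul0mx !addr0 !mulr0 !mul0r col200.
Qed.

Lemma mu_phase_col (b e1 e2 : R) m x0 x1 x2 a c :
  mu_of b ('i * e1%:C) ('i * e2%:C) a c *m phase_col m x0 x1 x2 a c =
  phase_col m.+1 (b%:C * (x1 * (a * a^*%C) + x2 * (c * c^*%C)))
    (b%:C * x0 + e1%:C * x1) (b%:C * x0 + e2%:C * x2) a c.
Proof.
rewrite /mu_of /phase_col mul_block_col conj_tr_mx2 mulNmx -!mulmxA !mx2_mul_col2.
rewrite !mul0mx !add0r col2N col2D expr_i_addn2 !exprS.
by congr (col_mx (col2 _ _) (col2 _ _)); ring.
Qed.

Lemma scale_blockmm_phase_col (X : 'M[C]_(2 + 2)) m x0 x1 x2 a c :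
  X *m col_mx 0 (col2 a c) = phase_col m x0 x1 x2 a c ->
  'i ^+ m.+1 *: blockmm X *m mx2 a 0 c 0 =
  mx2 ('i * ((-1) ^+ m * x1) * a) 0 ('i * ((-1) ^+ m * x2) * c) 0.
Proof.
move=> EX; rewrite -scalemxAl blockmm_mul_col EX col_mxKd !mxE /=.
apply/matrixP => i j; rewrite !mxE.
by case: ifP => _; case: ifP => _; rewrite ?mulr0 // !mulrA expr_i_odd.
Qed.

End PhaseColumns.

Section PolyShaped.
Variable R : rcfType.
Notation C := R[i].

Definition poly_shaped (m : nat) (V : C -> C -> 'cV[C]_(2 + 2)) :=
  exists p0 p1 p2 : {mpoly R[2]}, forall a c, V a c =
    phase_col m (eval_sqnorm p0 a c) (eval_sqnorm p1 a c) (eval_sqnorm p2 a c) a c.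

Lemma poly_shaped_eq m V W :
  (forall a c, V a c = W a c) -> poly_shaped m V -> poly_shaped m W.
Proof. by move=> VW [p0 [p1 [p2 EV]]]; exists p0, p1, p2 => a c; rewrite -VW. Qed.

Lemma poly_shaped_sum m (I : Type) (r : seq I) (P : pred I)
    (F : I -> C -> C -> 'cV[C]_(2 + 2)) :
  (forall i, P i -> poly_shaped m (F i)) ->
  poly_shaped m (fun a c => \sum_(i <- r | P i) F i a c).
Proof.
move=> shF; elim: r => [|i r [p0 [p1 [p2 EF]]]].
  by exists 0, 0, 0 => a c; rewrite big_nil !eval_sqnorm0 phase_col0.
case Pi: (P i); last by exists p0, p1, p2 => a c; rewrite big_cons Pi EF.
have [q0 [q1 [q2 EFi]]] := shF i Pi.
exists (q0 + p0), (q1 + p1), (q2 + p2) => a c.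
by rewrite big_cons Pi EF EFi phase_colD !eval_sqnormD.
Qed.

Lemma poly_shaped_Ppow m j V :
  poly_shaped m V -> poly_shaped m (fun a c => Ppow C j *m V a c).
Proof.
case: j => [[p0 [p1 [p2 EV]]]|] /=.
  by exists p0, 0, 0 => a c; rewrite EV Pplus_phase_col !eval_sqnorm0.
by apply: poly_shaped_eq => a c; rewrite mul1mx.
Qed.

Variables (b : R) (d1 d2 : C).
Hypotheses (Re_d1 : Re d1 = 0) (Re_d2 : Re d2 = 0).
Notation mu a c := (mu_of b d1 d2 a c).

Lemma poly_shaped_mu m V :
  poly_shaped m V -> poly_shaped m.+1 (fun a c => mu a c *m V a c).
Proof.
move=> [p0 [p1 [p2 EV]]].
exists (b%:MP * (p1 * 'X_ord0 + p2 * 'X_ord_max)),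
  (b%:MP * p0 + (complex.Im d1)%:MP * p1), (b%:MP * p0 + (complex.Im d2)%:MP * p2).
move=> a c; rewrite EV {1}(Re0_imaginary Re_d1) {1}(Re0_imaginary Re_d2) mu_phase_col.
by rewrite !(eval_sqnormD, eval_sqnormM, eval_sqnormC, eval_sqnormX0, eval_sqnormX1).
Qed.

Lemma poly_shaped_Hword m r V :
  poly_shaped m V -> poly_shaped (m + size r) (fun a c => Hword (mu a c) r *m V a c).
Proof.
elim: r => [|j r IH] shV /=.
  by rewrite addn0; apply: poly_shaped_eq shV => a c; rewrite mul1mx.
rewrite addnS; apply: poly_shaped_eq (poly_shaped_mu (poly_shaped_Ppow j (IH shV))).
by move=> a c; rewrite !mulmxA.
Qed.

Lemma poly_shaped_mu_Hml m n l V :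
  poly_shaped m V ->
  poly_shaped (m + n).+1 (fun a c => mu a c *m Hml n l (mu a c) *m V a c).
Proof.
move=> shV.
have shT (t : n.+1.-tuple bool) :
    poly_shaped (m + n).+1 (fun a c => mu a c *m Hterm (mu a c) t *m V a c).
  case: t => [[|j r] //= /eqP[size_r]]; rewrite -size_r.
  apply: poly_shaped_eq (poly_shaped_mu (poly_shaped_Ppow j (poly_shaped_Hword r shV))).
  by move=> a c; rewrite !mulmxA.
have := poly_shaped_sum (index_enum _)
  (P := fun t : n.+1.-tuple bool => count id t == l) (fun t _ => shT t).
by apply: poly_shaped_eq => a c; rewrite /Hml mulmx_sumr mulmx_suml.
Qed.

End PolyShaped.

Theorem proposition3p1 (R : realType) (b : R) (d1 d2 : R[i]) :
  0 < b -> Re d1 = 0 -> Re d2 = 0 ->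
  forall n k : nat, (1 <= n)%N -> (1 <= k <= n.+1)%N ->
  exists p1 p2 : {mpoly R[2]},
    forall alpha beta : R[i],
      `|alpha| ^+ 2 + `|beta| ^+ 2 = 1 ->
      let v := fun j : 'I_2 => if j == ord0 then `|alpha| ^+ 2 else `|beta| ^+ 2 in
      'i ^+ n.+1 *: (blockmm (mu_of b d1 d2 alpha beta *m
                              Hml (n.-1) (k.-1) (mu_of b d1 d2 alpha beta)))
        *m mx2 alpha 0 beta 0
      = mx2 ('i * (map_mpoly (real_complex R) p1).@[v] * alpha) 0 ('i * (map_mpoly (real_complex R) p2).@[v] * beta) 0.
Proof.
move=> _ Re_d1 Re_d2 [//|n] k _ _ /=.
have u_shaped : poly_shaped 0 (fun a c : R[i] => col_mx 0 (col2 a c)).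
  exists 0, 1, 1 => a c.
  by rewrite /phase_col eval_sqnorm0 !eval_sqnorm1 !mulr0 !expr0 !mul1r col200.
have [q0 [q1 [q2 Eq]]] := poly_shaped_mu_Hml b Re_d1 Re_d2 n k.-1 u_shaped.
exists (((-1) ^+ n.+1)%:MP * q1), (((-1) ^+ n.+1)%:MP * q2) => a c _.
rewrite (scale_blockmm_phase_col (Eq a c)).
by congr (mx2 ('i * _ * _) 0 ('i * _ * _) 0);
  rewrite -[RHS]/(eval_sqnorm _ a c) eval_sqnormM eval_sqnormC rmorphXn rmorphN1.
Qed.
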